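(* Let $P$ be a finite set of $m$ points in the plane, $\mathcal{R}$ a finite family of axis-aligned rectangles, $k\ge1$ an integer and $\alpha$ an integer with $1\le\alpha\le k$. Let $m^*$ be the maximum number of points of $P$ that can be exposed by deleting $k$ rectangles from $\mathcal{R}$, and let $m'$ be the value returned by the algorithm Greedy-Bicriteria with parameter $\alpha$. Then there is an absolute constant $c>0$ such that $m'\ge \alpha m^*/(ck^2)$; moreover the algorithm deletes at most $\alpha k$ rectangles, and the $m'$ points counted are exposed after these deletions.
   Context: A point $p$ is exposed with respect to a family $\mathcal{R}'$ of ranges if it lies in no range of $\mathcal{R}'$. For $p\in P$, $\mathcal{R}(p)$ denotes the set of rectangles in $\mathcal{R}$ containing $p$. Algorithm Greedy-Bicriteria: first discard all points $p$ with $|\mathcal{R}(p)|>k$. Partition the remaining points into groups (equivalence classes) $G_1,G_2,\dots$, where two points $p,p'$ lie in the same group iff $\mathcal{R}(p)=\mathcal{R}(p')$. Sort the groups so that $|G_1|\ge|G_2|\ge\cdots$, delete all rectangles containing the points of the first $\alpha$ groups, and return $m'=\sum_{1\le i\le\alpha}|G_i|$ as the number of exposed points. *)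

From HB Require Import structures.
From mathcomp Require Import all_boot all_order all_algebra.
From mathcomp Require Export reals.
Set Implicit Arguments. Unset Strict Implicit. Unset Printing Implicit Defensive.
Import Order.TTheory GRing.Theory Num.Theory.
Local Open Scope ring_scope.

Record rect (R : realType) := Rect { xl : R; xr : R; yl : R; yr : R }.

Definition rect_wf (R : realType) (r : rect R) : bool :=
  (xl r <= xr r) && (yl r <= yr r).

Definition in_rect (R : realType) (r : rect R) (q : R * R) : bool :=
  (xl r <= q.1 <= xr r) && (yl r <= q.2 <= yr r).

Section Greedy.
Variables (R : realType) (m n : nat) (pts : 'I_m -> R * R) (rs : 'I_n -> rect R).

Definition Rof (p : 'I_m) : {set 'I_n} := [set i | in_rect (rs i) (pts p)].

Definition exposed (F : {set 'I_n}) (p : 'I_m) : bool :=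
  [forall i in F, ~~ in_rect (rs i) (pts p)].

Definition mstar (k : nat) : nat :=
  \max_(D : {set 'I_n} | (#|D| <= k)%N) #|[set p | exposed (~: D) p]|.

(* points surviving the first step of Greedy-Bicriteria *)
Definition kept (k : nat) : {set 'I_m} := [set p | #|Rof p| <= k]%N.

(* the groups (equivalence classes), each identified by its common R(p) *)
Definition groups (k : nat) : {set {set 'I_n}} := [set Rof p | p in kept k].

Definition group (k : nat) (K : {set 'I_n}) : {set 'I_m} :=
  [set p in kept k | Rof p == K].

(* S is the set of the first alpha groups of some ordering of the groups
   by non-increasing size (any tie-breaking). *)
Definition greedy_choice (k alpha : nat) (S : {set {set 'I_n}}) : Prop :=
  [/\ S \subset groups k,
      #|S| = minn alpha #|groups k| &
      forall K K', K \in S -> K' \in groups k :\: S ->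
        (#|group k K'| <= #|group k K|)%N].

(* rectangles deleted by the algorithm: all those containing the points of
   the chosen groups *)
Definition deleted (S : {set {set 'I_n}}) : {set 'I_n} := \bigcup_(K in S) K.

Definition mprime (k : nat) (S : {set {set 'I_n}}) : nat :=
  (\sum_(K in S) #|group k K|)%N.

Definition counted (k : nat) (S : {set {set 'I_n}}) : {set 'I_m} :=
  \bigcup_(K in S) group k K.

End Greedy.

From mathcomp Require Import all_boot all_order reals zify.
Import Order.TTheory.

Set Implicit Arguments. Unset Strict Implicit. Unset Printing Implicit Defensive.

(* Let D be an optimal set of at most k deleted rectangles. A point exposed by
   D has R(p) inside D, and then R(p) only depends on the ranks of the two
   coordinates of p among the sides of the rectangles of D; so the points
   exposed by D fall into at most (2k+1)^2 groups. Each of these groups is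
   either chosen by the greedy algorithm or no larger than any of the alpha
   chosen groups, hence of size at most m'/alpha. Summing,
   alpha m* <= alpha m' + (2k+1)^2 m' <= 10 k^2 m'. *)

Lemma leq_card_bigcup (I T : finType) (P : pred I) (F : I -> {set T}) :
  #|\bigcup_(i | P i) F i| <= \sum_(i | P i) #|F i|.
Proof.
elim/big_rec2: _ => [|i c U _ IH]; first by rewrite cards0.
by rewrite (leq_trans (leq_card_setU (F i) U).1) ?leq_add2l.
Qed.

Lemma leq_card_imset_coarser (aT U V : finType) (A : {set aT})
    (f : aT -> U) (g : aT -> V) :
  {in A &, forall x y, g x = g y -> f x = f y} -> #|f @: A| <= #|g @: A|.
Proof.
move=> gf; pose gf_pair x := (g x, f x).
have -> : f @: A = snd @: (gf_pair @: A) by rewrite -imset_comp.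
have -> : g @: A = fst @: (gf_pair @: A) by rewrite -imset_comp.
apply: leq_trans (leq_imset_card _ _) _; rewrite [X in _ <= X]card_in_imset //.
move=> _ _ /imsetP[x xA ->] /imsetP[y yA ->] /= gxy.
by rewrite /gf_pair gxy (gf x y).
Qed.

Section Stabbing.
Variables (disp : Order.disp_t) (T : orderType disp) (I : finType).
Variables (lo hi : I -> T) (D : {set I}).

Definition stabbed (x : T) : {set I} := [set i in D | (lo i <= x <= hi i)%O].

Definition stab_rank (x : T) : nat :=
  #|[set i in D | (lo i <= x)%O]| + #|[set i in D | (hi i < x)%O]|.

Lemma stab_rank_le x : stab_rank x <= 2 * #|D|.
Proof.
have subD (P : pred I) : #|[set i in D | P i]| <= #|D|.
  by apply/subset_leq_card/subsetP => i; rewrite inE => /andP[].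
by rewrite mul2n -addnn leq_add ?subD.
Qed.

Lemma stabbedE x :
  stabbed x = [set i in D | (lo i <= x)%O] :\: [set i in D | (hi i < x)%O].
Proof.
apply/setP => i; rewrite !inE [(x <= _)%O]leNgt.
by case: (i \in D) => //=; rewrite andbC.
Qed.

(* Both sets counted by [stab_rank] grow with [x], so equal ranks force them
   to be equal. *)
Lemma stab_rank_inj x y : stab_rank x = stab_rank y -> stabbed x = stabbed y.
Proof.
wlog le_xy : x y / (x <= y)%O.
  move=> wlog_xy eq_rank; case: (leP x y) => [|/ltW] le; first exact: wlog_xy.
  by apply/esym/wlog_xy.
have sub_lo : [set i in D | (lo i <= x)%O] \subset [set i in D | (lo i <= y)%O].
  by apply/subsetP => i; rewrite !inE => /andP[-> /le_trans]; apply.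
have sub_hi : [set i in D | (hi i < x)%O] \subset [set i in D | (hi i < y)%O].
  by apply/subsetP => i; rewrite !inE => /andP[-> /lt_le_trans]; apply.
move: (subset_leq_card sub_lo) (subset_leq_card sub_hi); rewrite /stab_rank.
move=> le_lo le_hi eq_rank; rewrite !stabbedE; congr (_ :\: _); apply/eqP.
- by rewrite eqEcard sub_lo; lia.
- by rewrite eqEcard sub_hi; lia.
Qed.

End Stabbing.

Section TopSelection.
Variables (I : finType) (w : I -> nat) (G S : {set I}) (alpha : nat).
Hypotheses (sSG : S \subset G) (card_S : #|S| = minn alpha #|G|).
Hypothesis S_top : forall K K', K \in S -> K' \in G :\: S -> w K' <= w K.

Lemma top_dominates K' : K' \in G :\: S -> alpha * w K' <= \sum_(K in S) w K.
Proof.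
move=> K'GS; have ltSG : #|S| < #|G|.
  rewrite proper_card // properEneq sSG andbT.
  by apply: contraTneq K'GS => ->; rewrite setDv inE.
have -> : alpha = #|S| by move: ltSG; rewrite card_S; lia.
by rewrite -sum_nat_const; apply: leq_sum => K KS; apply: S_top.
Qed.

Lemma top_selection_sum (T : {set I}) : T \subset G ->
  alpha * \sum_(K in T) w K <= (alpha + #|T|) * \sum_(K in S) w K.
Proof.
move=> sTG; rewrite (big_setID S) /= mulnDr mulnDl leq_add //.
  by rewrite leq_mul2l [X in _ <= X](big_setID T) /= setIC leq_addr orbT.
rewrite big_distrr /=.
apply: (@leq_trans (\sum_(K in T :\: S) \sum_(K in S) w K)).
  apply: leq_sum => K' K'TS; apply: top_dominates.
  by move: K'TS; rewrite !inE => /andP[-> /(subsetP sTG)].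
by rewrite sum_nat_const leq_mul2r subset_leq_card ?orbT ?subsetDl.
Qed.

End TopSelection.

Section Rectangles.
Variables (R : realType) (m n : nat) (pts : 'I_m -> R * R) (rs : 'I_n -> rect R).

Local Notation Rof := (Rof pts rs).
Local Notation exposed := (exposed pts rs).
Local Notation group := (group pts rs).

Lemma exposedC (D : {set 'I_n}) p : exposed (~: D) p = (Rof p \subset D).
Proof.
apply/forallP/subsetP => [notin i | sub i].
  by rewrite inE => in_i; have := notin i; rewrite !inE in_i implybF negbK.
by rewrite inE; apply/implyP/contra => in_i; apply: sub; rewrite inE.
Qed.

Lemma setI_Rof (D : {set 'I_n}) p :
  D :&: Rof p = stabbed (fun i => xl (rs i)) (fun i => xr (rs i)) D (pts p).1
                :&: stabbed (fun i => yl (rs i)) (fun i => yr (rs i)) D (pts p).2.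
Proof. by apply/setP => i; rewrite !inE; case: (i \in D). Qed.

Lemma card_exposed_classes (D : {set 'I_n}) :
  #|Rof @: [set p | Rof p \subset D]| <= (2 * #|D|).+1 ^ 2.
Proof.
set N := (2 * #|D|).+1.
pose rank p : 'I_N * 'I_N :=
  (inord (stab_rank (fun i => xl (rs i)) (fun i => xr (rs i)) D (pts p).1),
   inord (stab_rank (fun i => yl (rs i)) (fun i => yr (rs i)) D (pts p).2)).
apply: leq_trans (leq_card_imset_coarser (g := rank) _) _.
  move=> p q; rewrite !inE => /setIidPr <- /setIidPr <-.
  case=> /(congr1 (@nat_of_ord N)) + /(congr1 (@nat_of_ord N)).
  rewrite !inordK ?ltnS ?stab_rank_le // => /stab_rank_inj eq_x /stab_rank_inj eq_y.
  by rewrite !setI_Rof eq_x eq_y.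
by rewrite (leq_trans (max_card _)) // card_prod card_ord.
Qed.

Lemma mem_counted k S p :
  (p \in counted pts rs k S) = (p \in kept pts rs k) && (Rof p \in S).
Proof.
apply/bigcupP/andP => [[K KS]|[pk pS]]; first by rewrite inE => /andP[-> /eqP ->].
by exists (Rof p); rewrite // inE pk eqxx.
Qed.

Lemma card_counted k S : #|counted pts rs k S| = mprime pts rs k S.
Proof.
rewrite -sum1_card (partition_big Rof (fun K => K \in S)) => [|p]; last first.
  by rewrite mem_counted => /andP[].
apply: eq_bigr => K KS; rewrite sum1_card; apply: eq_card => p.
rewrite unfold_in /= mem_counted !inE -andbA.
by case: eqP => [->|]; rewrite ?andbF // KS.
Qed.

Lemma counted_exposed k S p :
  p \in counted pts rs k S -> exposed (~: deleted S) p.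
Proof. by rewrite mem_counted exposedC => /andP[_]; apply: bigcup_sup. Qed.

Lemma card_deleted k alpha S :
  greedy_choice pts rs k alpha S -> #|deleted S| <= alpha * k.
Proof.
case=> sSG card_S _; apply: leq_trans (leq_card_bigcup _ _) _.
apply: (@leq_trans (\sum_(K in S) k)).
  by apply: leq_sum => K /(subsetP sSG) /imsetP[p]; rewrite inE => pk ->.
by rewrite sum_nat_const card_S leq_mul2r geq_minl orbT.
Qed.

Lemma mstar_attained k : exists2 D : {set 'I_n},
  #|D| <= k & mstar pts rs k = #|[set p | Rof p \subset D]|.
Proof.
have [|D Dk max_D] := eq_bigmax_cond (fun D => #|[set p | exposed (~: D) p]|)
  (A := [pred D : {set 'I_n} | #|D| <= k]).
  by apply/card_gt0P; exists set0; rewrite inE cards0.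
exists D => //; apply: etrans max_D _.
by apply: eq_card => p; rewrite !inE exposedC.
Qed.

Lemma card_exposed_groups k (D : {set 'I_n}) : #|D| <= k ->
  #|[set p | Rof p \subset D]|
    <= \sum_(K in Rof @: [set p | Rof p \subset D]) #|group k K|.
Proof.
move=> Dk; apply: leq_trans (leq_card_bigcup _ _).
apply/subset_leq_card/subsetP => p pD; apply/bigcupP.
exists (Rof p); first exact: imset_f.
by move: pD; rewrite !inE eqxx andbT => /subset_leq_card /leq_trans; apply.
Qed.

Lemma greedy_approximation k alpha S : 1 <= k -> alpha <= k ->
  greedy_choice pts rs k alpha S ->
  alpha * mstar pts rs k <= 10 * k ^ 2 * mprime pts rs k S.
Proof.
move=> k_gt0 le_alpha_k [sSG card_S S_top]; have [D Dk ->] := mstar_attained k.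
set T := Rof @: [set p | Rof p \subset D].
have sTG : T \subset groups pts rs k.
  apply/subsetP => _ /imsetP[p pD ->]; apply: imset_f.
  by move: pD; rewrite !inE => /subset_leq_card /leq_trans; apply.
have card_T : #|T| <= (2 * k).+1 ^ 2.
  by rewrite (leq_trans (card_exposed_classes D)) // leq_exp2r // ltnS leq_mul2l Dk.
rewrite (leq_trans (leq_mul (leqnn alpha) (card_exposed_groups Dk))) //.
rewrite (leq_trans (top_selection_sum sSG card_S S_top sTG)) // leq_mul2r.
by apply/orP; right; move: #|T| card_T => t; rewrite !expnS !expn0 !muln1; nia.
Qed.

End Rectangles.

Theorem mainTheorem6 :
  exists c : nat, (0 < c)%N /\
  forall (R : realType) (m n : nat) (pts : 'I_m -> R * R) (rs : 'I_n -> rect R),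
    injective pts ->
    (forall i, rect_wf (rs i)) ->
    forall (k alpha : nat), (1 <= k)%N -> (1 <= alpha <= k)%N ->
    forall S : {set {set 'I_n}}, greedy_choice pts rs k alpha S ->
      [/\ (alpha * mstar pts rs k <= c * k ^ 2 * mprime pts rs k S)%N,
          (#|deleted S| <= alpha * k)%N,
          #|counted pts rs k S| = mprime pts rs k S &
          forall p, p \in counted pts rs k S -> exposed pts rs (~: deleted S) p].
Proof.
exists 10; split => // R m n pts rs _ _ k alpha k_gt0 /andP[_ le_alpha_k] S greedy_S.
split; [exact: greedy_approximation | exact: card_deleted greedy_S |
        exact: card_counted | exact: counted_exposed].
Qed.
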